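(* Let $Y^1,\dots,Y^{n+3}\in\mathbb{R}^n$ with components $Y^\alpha=(Y^\alpha_i)_{i=1}^n$. Then $$\sum_{\alpha,\beta'=1}^{n+3}(Y^\alpha)^T\mathbb X^{\alpha\beta'}Y^{\beta'}=\varepsilon\nu\big|Y^{n+1}+(n+2)\Theta Y^{n+3}\big|^2+4\varepsilon\kappa\Theta^2|Y^{n+3}|^2$$ $$+\frac{\varepsilon\mu\Theta}2\sum_{i,\alpha=1}^n\Big|\Big(Y^\alpha_i+Y^i_\alpha-\frac2n\sum_{j=1}^nY^j_j\delta_{i\alpha}\Big)+2\Big(u_iY^{n+3}_\alpha+u_\alpha Y^{n+3}_i-\frac2n\sum_{j=1}^nu_jY^{n+3}_j\delta_{i\alpha}\Big)\Big|^2,$$ and this quantity is nonnegative; in particular the matrix $\mathbb X$ is nonnegative.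
   Context: Let $n\ge1$, $\varepsilon>0$, $\Theta>0$, $u\in\mathbb{R}^n$, and let $\mu,\kappa,\nu$ be positive reals (in the paper $\mu=\rho\Theta\langle m^{-1}\rangle_\beta$, $\kappa=\frac{n+2}2\rho\Theta\langle m^{-2}\rangle_\beta$, $\nu=\rho\Theta(\langle m^{-2}\rangle_\beta-\langle m^{-1}\rangle_\beta^2)$, which are positive). With $(e_1,\dots,e_n)$ the canonical basis of $\mathbb{R}^n$, $(a\otimes b)_{ij}=a_ib_j$, $\mathrm 0_n$ the zero matrix, define $n\times n$ blocks $\mathbb X^{\alpha\beta'}$, $\alpha,\beta'\in\{1,\dots,n+3\}$: $\mathbb X^{\alpha\beta'}=\varepsilon\mu\Theta(\mathrm I_n\delta^{\alpha\beta'}+e_{\beta'}\otimes e_\alpha-\frac2ne_\alpha\otimes e_{\beta'})$ for $\alpha,\beta'\le n$; $\mathbb X^{\alpha,n+1}=\mathbb X^{\alpha,n+2}=(\mathbb X^{n+1,\alpha})^T=(\mathbb X^{n+2,\alpha})^T=\mathrm 0_n$ for $\alpha\le n$; $\mathbb X^{\alpha,n+3}=(\mathbb X^{n+3,\alpha})^T=2\varepsilon\mu\Theta(u_\alpha\mathrm I_n+u\otimes e_\alpha-\frac2ne_\alpha\otimes u)$ for $\alpha\le n$; $\mathbb X^{n+1,n+1}=\varepsilon\nu\mathrm I_n$, $\mathbb X^{n+1,n+2}=\mathbb X^{n+2,n+1}=\mathbb X^{n+2,n+2}=\mathrm 0_n$; $\mathbb X^{n+1,n+3}=\mathbb X^{n+3,n+1}=(n+2)\varepsilon\nu\Theta\mathrm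 I_n$, $\mathbb X^{n+2,n+3}=\mathbb X^{n+3,n+2}=\mathrm 0_n$; $\mathbb X^{n+3,n+3}=\varepsilon\Theta[((n+2)^2\nu\Theta+4\kappa\Theta+4\mu|u|^2)\mathrm I_n+4\frac{n-2}n\mu\,u\otimes u]$. *)

From HB Require Import structures.
From mathcomp Require Import all_boot all_order all_algebra.
Set Implicit Arguments. Unset Strict Implicit. Unset Printing Implicit Defensive.
Import Order.TTheory GRing.Theory Num.Theory.
Local Open Scope ring_scope.

Section Defs.
Variables (R : realFieldType) (n : nat).

(* canonical basis vector e_k of R^n (0-based index k; e_k = 0 if k >= n) *)
Definition ev (k : nat) : 'cV[R]_n := \col_(i < n) ((i : nat) == k)%:R.

Definition tens (a b : 'cV[R]_n) : 'M[R]_n := a *m b^T.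

Definition cmp (v : 'cV[R]_n) (k : nat) : R := ((ev k)^T *m v) 0 0.

Definition sqnorm (v : 'cV[R]_n) : R := \sum_(i < n) v i 0 ^+ 2.

(* The n x n blocks X^{ab}, indices a b : 'I_n.+3 are 0-based:
   paper index alpha in 1..n   <-> a in 0..n-1,
   paper index n+1, n+2, n+3   <-> a = n, n+1, n+2. *)
Definition Xblk (eps mu kappa nu Theta : R) (u : 'cV[R]_n) (a b : 'I_n.+3)
  : 'M[R]_n :=
  let c := 2%:R / n%:R in
  let XU (k : nat) : 'M[R]_n :=
    (2%:R * eps * mu * Theta) *:
      ((cmp u k) *: 1%:M + tens u (ev k) - c *: tens (ev k) u) in
  if (((a : nat) < n)%N && ((b : nat) < n)%N) then
    (eps * mu * Theta) *:
      (((a : nat) == b)%:R *: 1%:M + tens (ev b) (ev a) - c *: tens (ev a) (ev b))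
  else if ((a : nat) < n)%N then
    (if (b : nat) == n.+2 then XU a else 0)
  else if ((b : nat) < n)%N then
    (if (a : nat) == n.+2 then (XU b)^T else 0)
  else if ((a : nat) == n) && ((b : nat) == n) then (eps * nu) *: 1%:M
  else if (((a : nat) == n) && ((b : nat) == n.+2))
          || (((a : nat) == n.+2) && ((b : nat) == n)) then
    ((n%:R + 2%:R) * eps * nu * Theta) *: 1%:M
  else if ((a : nat) == n.+2) && ((b : nat) == n.+2) then
    (eps * Theta) *:
      (((n%:R + 2%:R) ^+ 2 * nu * Theta + 4%:R * kappa * Theta
         + 4%:R * mu * sqnorm u) *: 1%:M
       + (4%:R * (n%:R - 2%:R) / n%:R * mu) *: tens u u)
  else 0.

Definition Xform (eps mu kappa nu Theta : R) (u : 'cV[R]_n)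
  (Y : 'I_n.+3 -> 'cV[R]_n) : R :=
  \sum_(a < n.+3) \sum_(b < n.+3)
     ((Y a)^T *m Xblk eps mu kappa nu Theta u a b *m Y b) 0 0.

End Defs.

From HB Require Import structures.
From mathcomp Require Import all_boot all_order all_algebra.
From mathcomp Require Import ring zify.
Set Implicit Arguments. Unset Strict Implicit. Unset Printing Implicit Defensive.
Import Order.TTheory GRing.Theory Num.Theory.
Local Open Scope ring_scope.

(* Let W = [Y^1 ... Y^n] + 2 u (Y^{n+3})^T and
   D(A, C) = tr(A C^T) + tr(A C) - (2/n) tr A tr C ([devsym_form]).  The double sum of squares
   in the statement is the squared norm of W + W^T - (2/n) (tr W) I, which is
   2 D(W, W).  On the other side, the blocks X^{ab} with a, b <= n, the blocks
   X^{a,n+3} and X^{n+3,a}, and the mu-part of X^{n+3,n+3} add up to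
   eps mu Theta D(W, W), by bilinearity of D: the last one because
   |u|^2 |Y^{n+3}|^2 + (1 - 2/n) (u . Y^{n+3})^2 = D(u (Y^{n+3})^T, u (Y^{n+3})^T).
   The nu- and kappa-blocks complete the square in Y^{n+1} + (n+2) Theta Y^{n+3}. *)

Section Forms.
Variables (R : realFieldType) (n : nat).
Implicit Types (v w a b : 'cV[R]_n) (M N : 'M[R]_n).

Definition dot v w : R := \sum_(i < n) v i 0 * w i 0.
Definition mxform v M w : R := (v^T *m M *m w) 0 0.

Lemma dotC v w : dot v w = dot w v.
Proof. by apply: eq_bigr => i _; rewrite mulrC. Qed.

Lemma dotE v w : (v^T *m w) 0 0 = dot v w.
Proof. by rewrite mxE; apply: eq_bigr => i _; rewrite mxE. Qed.

Lemma mxformD v M N w : mxform v (M + N) w = mxform v M w + mxform v N w.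
Proof. by rewrite /mxform mulmxDr mulmxDl mxE. Qed.

Lemma mxformB v M N w : mxform v (M - N) w = mxform v M w - mxform v N w.
Proof. by rewrite /mxform mulmxBr mulmxBl !mxE. Qed.

Lemma mxformZ v k M w : mxform v (k *: M) w = k * mxform v M w.
Proof. by rewrite /mxform -scalemxAr -scalemxAl mxE. Qed.

Lemma mxform0 v w : mxform v 0 w = 0.
Proof. by rewrite /mxform mulmx0 mul0mx mxE. Qed.

Lemma mxform1 v w : mxform v 1%:M w = dot v w.
Proof. by rewrite /mxform mulmx1 dotE. Qed.

Lemma mxform_tens v a b w : mxform v (tens a b) w = dot v a * dot b w.
Proof. by rewrite /mxform /tens !mulmxA -(mulmxA (v^T *m a)) mxE big_ord1 -!dotE. Qed.

Lemma mxform_tr v M w : mxform v M^T w = mxform w M v.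
Proof. by rewrite /mxform -(trmxK w) -!trmx_mul mxE trmxK mulmxA. Qed.

Lemma dot_ev v (k : 'I_n) : dot v (ev R n k) = v k 0.
Proof.
rewrite /dot (bigD1 k) //= mxE eqxx mulr1 big1 ?addr0 // => i ik.
by rewrite mxE (inj_eq val_inj) (negbTE ik) mulr0.
Qed.

Lemma ev_dot v (k : 'I_n) : dot (ev R n k) v = v k 0.
Proof. by rewrite dotC dot_ev. Qed.

Lemma cmpE v (k : 'I_n) : cmp v k = v k 0.
Proof. by rewrite /cmp dotE ev_dot. Qed.

Lemma sqnormE v : sqnorm v = dot v v.
Proof. by apply: eq_bigr => i _; rewrite expr2. Qed.

Lemma sqnorm_ge0 v : 0 <= sqnorm v.
Proof. by apply: sumr_ge0 => i _; exact: sqr_ge0. Qed.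

Lemma sqnormD_scale v w k :
  sqnorm (v + k *: w) = sqnorm v + 2%:R * k * dot v w + k ^+ 2 * sqnorm w.
Proof.
rewrite /sqnorm /dot !mulr_sumr -!big_split /=.
by apply: eq_bigr => i _; rewrite !mxE; ring.
Qed.

Lemma tensE a b i j : tens a b i j = a i 0 * b j 0.
Proof. by rewrite !mxE big_ord1 mxE. Qed.

Lemma mxtrace_tens a b : \tr (tens a b) = dot a b.
Proof. by apply: eq_bigr => i _; rewrite tensE. Qed.

End Forms.

Section DeviatoricForm.
Variables (R : realFieldType) (n : nat).
Implicit Types (A B C : 'M[R]_n) (v w : 'cV[R]_n).

Definition devsym_form A C : R :=
  \tr (A *m C^T) + \tr (A *m C) - 2%:R / n%:R * (\tr A * \tr C).

Lemma devsym_formC A C : devsym_form A C = devsym_form C A.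
Proof.
rewrite /devsym_form [\tr (A *m C)]mxtrace_mulC [\tr A * _]mulrC.
by rewrite -[\tr (A *m C^T)]mxtrace_tr trmx_mul trmxK.
Qed.

Lemma devsym_formDl A B C : devsym_form (A + B) C = devsym_form A C + devsym_form B C.
Proof. by rewrite /devsym_form !mulmxDl !mxtraceD; ring. Qed.

Lemma devsym_formZl k A C : devsym_form (k *: A) C = k * devsym_form A C.
Proof. by rewrite /devsym_form -!scalemxAl !mxtraceZ; ring. Qed.

Lemma devsym_form_expand A C k :
  devsym_form (A + k *: C) (A + k *: C)
  = devsym_form A A + 2%:R * k * devsym_form A C + k ^+ 2 * devsym_form C C.
Proof.
rewrite devsym_formDl devsym_formZl ![devsym_form _ (A + _)]devsym_formC.
by rewrite !devsym_formDl !devsym_formZl [devsym_form C A]devsym_formC; ring.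
Qed.

Lemma mxtrace_mul_trE A C : \tr (A *m C^T) = \sum_(i < n) \sum_(j < n) A i j * C i j.
Proof. by apply: eq_bigr => i _; rewrite mxE; apply: eq_bigr => j _; rewrite mxE. Qed.

Lemma mxtrace_mulE A C : \tr (A *m C) = \sum_(i < n) \sum_(j < n) A i j * C j i.
Proof. by apply: eq_bigr => i _; rewrite mxE. Qed.

Lemma devsym_form_tens v w :
  devsym_form (tens v w) (tens v w)
  = dot v v * dot w w + (1 - 2%:R / n%:R) * dot v w ^+ 2.
Proof.
have tens_sq : \sum_i \sum_j tens v w i j * tens v w i j = dot v v * dot w w.
  rewrite /dot big_distrlr; apply: eq_bigr => i _; apply: eq_bigr => j _.
  by rewrite /= !tensE; ring.
have tens_tr : \sum_i \sum_j tens v w i j * tens v w j i = dot v w ^+ 2.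
  rewrite expr2 /dot big_distrlr; apply: eq_bigr => i _; apply: eq_bigr => j _.
  by rewrite /= !tensE; ring.
by rewrite /devsym_form mxtrace_mul_trE mxtrace_mulE mxtrace_tens tens_sq tens_tr; ring.
Qed.

Lemma sum_delta (i : 'I_n) (F : 'I_n -> R) : \sum_(a < n) (i == a)%:R * F a = F i.
Proof.
rewrite (bigD1 i) //= eqxx mul1r big1 ?addr0 // => a ai.
by rewrite eq_sym (negbTE ai) mul0r.
Qed.

Lemma sum_sym_sub_scalar_sq A h :
  \sum_(i < n) \sum_(a < n) (A i a + A a i - h * (i == a)%:R) ^+ 2
  = 2%:R * (\tr (A *m A^T) + \tr (A *m A)) - 4%:R * h * \tr A + n%:R * h ^+ 2.
Proof.
have row i : \sum_(a < n) (A i a + A a i - h * (i == a)%:R) ^+ 2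
    = \sum_(a < n) (A i a * A i a + A a i * A a i + 2%:R * (A i a * A a i))
      - 4%:R * h * A i i + h ^+ 2.
  rewrite (eq_bigr (fun a => (A i a * A i a + A a i * A a i + 2%:R * (A i a * A a i))
                             - (i == a)%:R * (2%:R * h * (A i a + A a i) - h ^+ 2))).
    by rewrite sumrB sum_delta; ring.
  by move=> a _; case: (i == a) => /=; ring.
rewrite (eq_bigr _ (fun i _ => row i)) /= big_split sumrB /= -mulr_sumr sumr_const card_ord.
under eq_bigr => i _ do rewrite !big_split /= -mulr_sumr.
rewrite !big_split /= mxtrace_mul_trE mxtrace_mulE -mulr_sumr.
rewrite [\sum_i \sum_a A a i * A a i]exchange_big -[h ^+ 2 *+ n]mulr_natl /=.
by rewrite /mxtrace; ring.
Qed.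

Lemma sum_devsym_sq A : n%:R != 0 :> R ->
  \sum_(i < n) \sum_(a < n) (A i a + A a i - 2%:R / n%:R * \tr A * (i == a)%:R) ^+ 2
  = 2%:R * devsym_form A A.
Proof. by move=> n_neq0; rewrite sum_sym_sub_scalar_sq /devsym_form; field. Qed.

End DeviatoricForm.

Lemma sum_ord3 (n : nat) (V : nmodType) (F : 'I_n.+3 -> V) : \sum_(a < n.+3) F a
  = \sum_(a < n) F (inord a) + F (inord n) + F (inord n.+1) + F (inord n.+2).
Proof.
rewrite (eq_bigr (fun a : 'I_n.+3 => F (inord a))) => [|a _]; last by rewrite inord_val.
by rewrite !big_ord_recr.
Qed.

Section Blocks.
Variables (R : realFieldType) (n : nat) (eps mu kappa nu Theta : R) (u : 'cV[R]_n).
Local Notation X := (Xblk eps mu kappa nu Theta u).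
Local Notation XU k := ((2%:R * eps * mu * Theta) *:
  (cmp u k *: 1%:M + tens u (ev R n k) - (2%:R / n%:R) *: tens (ev R n k) u)).

Lemma ltn_ord3 (a : 'I_n) : (a < n.+3)%N.
Proof. by rewrite (leq_trans (ltn_ord a)) // !leqW. Qed.

(* In the names below, [v] stands for an index [inord a] with [a < n], and
   1, 2, 3 for the paper's indices n+1, n+2, n+3, i.e. [inord n], [inord n.+1],
   [inord n.+2]. *)
Ltac Xblk_case :=
  rewrite /Xblk ?inordK ?ltn_ord3; try lia; rewrite ?ltn_ord //=;
  repeat case: ifP => //; lia.

Lemma Xblk_vv (a b : 'I_n) : X (inord a) (inord b) = (eps * mu * Theta) *:
  ((a == b)%:R *: 1%:M + tens (ev R n b) (ev R n a)
   - (2%:R / n%:R) *: tens (ev R n a) (ev R n b)).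
Proof. Xblk_case. Qed.

Lemma Xblk_v3 (a : 'I_n) : X (inord a) (inord n.+2) = XU a.
Proof. Xblk_case. Qed.

Lemma Xblk_3v (a : 'I_n) : X (inord n.+2) (inord a) = (XU a)^T.
Proof. Xblk_case. Qed.

Lemma Xblk_v1 (a : 'I_n) : X (inord a) (inord n) = 0.
Proof. Xblk_case. Qed.

Lemma Xblk_1v (a : 'I_n) : X (inord n) (inord a) = 0.
Proof. Xblk_case. Qed.

Lemma Xblk_2l (b : 'I_n.+3) : X (inord n.+1) b = 0.
Proof. Xblk_case. Qed.

Lemma Xblk_2r (a : 'I_n.+3) : X a (inord n.+1) = 0.
Proof. Xblk_case. Qed.

Lemma Xblk_11 : X (inord n) (inord n) = (eps * nu) *: 1%:M.
Proof. Xblk_case. Qed.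

Lemma Xblk_13 : X (inord n) (inord n.+2) = ((n%:R + 2%:R) * eps * nu * Theta) *: 1%:M.
Proof. Xblk_case. Qed.

Lemma Xblk_31 : X (inord n.+2) (inord n) = ((n%:R + 2%:R) * eps * nu * Theta) *: 1%:M.
Proof. Xblk_case. Qed.

Lemma Xblk_33 : X (inord n.+2) (inord n.+2) = (eps * Theta) *:
  (((n%:R + 2%:R) ^+ 2 * nu * Theta + 4%:R * kappa * Theta + 4%:R * mu * sqnorm u) *: 1%:M
   + (4%:R * (n%:R - 2%:R) / n%:R * mu) *: tens u u).
Proof. Xblk_case. Qed.
End Blocks.

Section FormOfY.
Variables (R : realFieldType) (n : nat) (eps mu kappa nu Theta : R) (u : 'cV[R]_n).
Variable Y : 'I_n.+3 -> 'cV[R]_n.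
Local Notation X := (Xblk eps mu kappa nu Theta u).
Local Notation y a := (Y (inord a)).
Local Notation Z := (Y (inord n.+2)).

Definition Ymx : 'M[R]_n := \matrix_(i, a) y a i 0.

Lemma sum_Ymx (F : 'I_n -> 'I_n -> R) :
  \sum_(i < n) \sum_(j < n) Ymx i j * F i j = \sum_(a < n) \sum_(i < n) y a i 0 * F i a.
Proof. by rewrite exchange_big; apply: eq_bigr => a _; apply: eq_bigr => i _; rewrite mxE. Qed.

Lemma devsym_form_Ymx C : devsym_form Ymx C = \sum_(a < n)
  (\sum_(i < n) y a i 0 * (C i a + C a i) - 2%:R / n%:R * (y a a 0 * \tr C)).
Proof.
rewrite /devsym_form mxtrace_mul_trE mxtrace_mulE (sum_Ymx (fun i j => C i j)).
rewrite (sum_Ymx (fun i j => C j i)) -big_split [\tr Ymx]/mxtrace mulr_suml mulr_sumr -sumrB.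
apply: eq_bigr => a _; rewrite -big_split /= mxE; congr (_ - _).
by apply: eq_bigr => i _; rewrite mulrDr.
Qed.

Lemma mxform_vv_sum : \sum_(a < n) \sum_(b < n) mxform (y a) (X (inord a) (inord b)) (y b)
  = eps * mu * Theta * devsym_form Ymx Ymx.
Proof.
have trY : \tr Ymx = \sum_(b < n) y b b 0 by apply: eq_bigr => b _; rewrite mxE.
rewrite devsym_form_Ymx trY mulr_sumr; apply: eq_bigr => a _.
under eq_bigr => b _ do
  rewrite Xblk_vv !(mxformZ, mxformB, mxformD) mxform1 !mxform_tens !dot_ev !ev_dot.
under [in RHS]eq_bigr => i _ do rewrite !mxE mulrDr.
by rewrite -mulr_sumr sumrB !big_split /= sum_delta -!mulr_sumr.
Qed.

Lemma mxform_v3_sum : \sum_(a < n) mxform (y a) (X (inord a) (inord n.+2)) Z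
  = 2%:R * eps * mu * Theta * devsym_form Ymx (tens u Z).
Proof.
rewrite devsym_form_Ymx mxtrace_tens mulr_sumr; apply: eq_bigr => a _.
rewrite Xblk_v3 !(mxformZ, mxformB, mxformD) mxform1 !mxform_tens cmpE dot_ev ev_dot.
have -> : \sum_(i < n) y a i 0 * (tens u Z i a + tens u Z a i)
          = dot (y a) u * Z a 0 + u a 0 * dot (y a) Z.
  rewrite /dot mulr_suml mulr_sumr -big_split; apply: eq_bigr => i _.
  by rewrite /= !tensE; ring.
ring.
Qed.

Lemma mxform_3v_sum : \sum_(a < n) mxform Z (X (inord n.+2) (inord a)) (y a)
  = 2%:R * eps * mu * Theta * devsym_form Ymx (tens u Z).
Proof. by rewrite -mxform_v3_sum; apply: eq_bigr => a _; rewrite Xblk_3v mxform_tr Xblk_v3. Qed.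

Lemma mxform_33 : n%:R != 0 :> R ->
  mxform Z (X (inord n.+2) (inord n.+2)) Z
  = eps * Theta ^+ 2 * ((n%:R + 2%:R) ^+ 2 * nu + 4%:R * kappa) * dot Z Z
    + 4%:R * eps * mu * Theta * devsym_form (tens u Z) (tens u Z).
Proof.
move=> n_neq0; rewrite Xblk_33 !(mxformZ, mxformD) mxform1 mxform_tens.
by rewrite devsym_form_tens sqnormE [dot Z u]dotC; field.
Qed.

Lemma Xform_expand : n%:R != 0 :> R ->
  Xform eps mu kappa nu Theta u Y
  = eps * mu * Theta * devsym_form (Ymx + 2%:R *: tens u Z) (Ymx + 2%:R *: tens u Z)
    + eps * nu * dot (y n) (y n) + 2%:R * (n%:R + 2%:R) * eps * nu * Theta * dot (y n) Z
    + eps * Theta ^+ 2 * ((n%:R + 2%:R) ^+ 2 * nu + 4%:R * kappa) * dot Z Z.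
Proof.
move=> n_neq0.
have -> : Xform eps mu kappa nu Theta u Y
          = \sum_(a < n.+3) \sum_(b < n.+3) mxform (Y a) (X a b) (Y b) by [].
rewrite sum_ord3; under eq_bigr => a _ do rewrite sum_ord3.
rewrite !sum_ord3 !big_split /= mxform_vv_sum mxform_v3_sum mxform_3v_sum mxform_33 //.
have -> : \sum_(a < n) mxform (y a) (X (inord a) (inord n)) (y n) = 0.
  by apply: big1 => a _; rewrite Xblk_v1 mxform0.
have -> : \sum_(a < n) mxform (y a) (X (inord a) (inord n.+1)) (y n.+1) = 0.
  by apply: big1 => a _; rewrite Xblk_2r mxform0.
have -> : \sum_(b < n) mxform (y n) (X (inord n) (inord b)) (y b) = 0.
  by apply: big1 => b _; rewrite Xblk_1v mxform0.
have -> : \sum_(b < n) mxform (y n.+1) (X (inord n.+1) (inord b)) (y b) = 0.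
  by apply: big1 => b _; rewrite Xblk_2l mxform0.
rewrite !Xblk_2l !Xblk_2r Xblk_11 Xblk_13 Xblk_31 !mxform0 !mxformZ !mxform1.
by rewrite devsym_form_expand [dot Z (y n)]dotC; ring.
Qed.

Lemma sum_sq_devsym_Ymx : n%:R != 0 :> R ->
  \sum_(i < n) \sum_(a < n)
    ( (y a i 0 + y i a 0 - 2%:R / n%:R * (\sum_(j < n) y j j 0) * (i == a)%:R)
      + 2%:R * (u i 0 * Z a 0 + u a 0 * Z i 0
                - 2%:R / n%:R * (\sum_(j < n) u j 0 * Z j 0) * (i == a)%:R) ) ^+ 2
  = 2%:R * devsym_form (Ymx + 2%:R *: tens u Z) (Ymx + 2%:R *: tens u Z).
Proof.
move=> n_neq0; rewrite -sum_devsym_sq // mxtraceD mxtraceZ mxtrace_tens.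
have -> : \tr Ymx = \sum_(j < n) y j j 0 by apply: eq_bigr => j _; rewrite mxE.
apply: eq_bigr => i _; apply: eq_bigr => a _.
by rewrite !(tensE, mxE) /dot; ring.
Qed.

End FormOfY.

Theorem lemma4p7 (R : realFieldType) (n : nat) (eps Theta mu kappa nu : R)
  (u : 'cV[R]_n) (Y : 'I_n.+3 -> 'cV[R]_n) :
  (0 < n)%N -> 0 < eps -> 0 < Theta -> 0 < mu -> 0 < kappa -> 0 < nu ->
  let Yn1 := Y (inord n) in
  let Yn3 := Y (inord n.+2) in
  Xform eps mu kappa nu Theta u Y =
    eps * nu * sqnorm (Yn1 + ((n%:R + 2%:R) * Theta) *: Yn3)
    + 4%:R * eps * kappa * Theta ^+ 2 * sqnorm Yn3
    + (eps * mu * Theta / 2%:R) *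
      \sum_(i < n) \sum_(a < n)
        ( (Y (inord a) i 0 + Y (inord i) a 0
           - 2%:R / n%:R * (\sum_(j < n) Y (inord j) j 0) * (i == a)%:R)
          + 2%:R * (u i 0 * Yn3 a 0 + u a 0 * Yn3 i 0
           - 2%:R / n%:R * (\sum_(j < n) u j 0 * Yn3 j 0) * (i == a)%:R) ) ^+ 2
  /\ 0 <= Xform eps mu kappa nu Theta u Y.
Proof.
move=> n_gt0 eps_gt0 Theta_gt0 mu_gt0 kappa_gt0 nu_gt0 /=.
have n_neq0 : n%:R != 0 :> R by rewrite pnatr_eq0 -lt0n.
set rhs := (X in _ = X /\ _).
have identity : Xform eps mu kappa nu Theta u Y = rhs.
  rewrite /rhs Xform_expand // sum_sq_devsym_Ymx // sqnormD_scale !sqnormE.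
  by field.
split=> //; rewrite identity /rhs.
have sum_sq_ge0 (F : 'I_n -> 'I_n -> R) : 0 <= \sum_i \sum_a F i a ^+ 2.
  by do 2!apply: sumr_ge0 => ? _; exact: sqr_ge0.
by rewrite !addr_ge0 ?mulr_ge0 ?divr_ge0 ?invr_ge0 ?sqnorm_ge0 ?sum_sq_ge0 ?exprn_ge0 ?ltW.
Qed.
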